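(* Let $G=(V,A)$ be a graph, $\mathfrak n=\mathfrak n(G)$, and $\delta$ a Lie bialgebra structure on $\mathfrak n$ with $\delta(\mathfrak z)=0$ and such that for every vertex $e_i$, $\delta(e_i)=\sum_{\alpha\in A}\lambda_{i,\alpha}\,e_i\wedge\alpha+\omega_i$ for some scalars $\lambda_{i,\alpha}$ and some $\omega_i\in\Lambda^2\mathfrak z$ (i.e. the maps $D_\alpha$ with $\delta(v)\equiv\sum_\alpha D_\alpha(v)\wedge\alpha \bmod \Lambda^2\mathfrak z$ are diagonal in the vertex basis with $D_\alpha(e_i)=\lambda_{i,\alpha}e_i$). If $\alpha_0\in A$ joins $e_{i_0}$ and $e_{j_0}$, then $\lambda_{i_0,\alpha}=-\lambda_{j_0,\alpha}$ for all $\alpha\in A$ with $\alpha\ne\alpha_0$.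
   Context: $G=(V,A)$ is a finite simple graph without loops and without isolated vertices, $V=\{e_1,\dots,e_n\}$ ordered, each edge joining $e_i,e_j$ ($i<j$) oriented from $e_i$ to $e_j$. $\mathfrak n(G)$ over a field of characteristic zero has basis $V\cup A$, $[e_i,e_j]=\alpha$ if $\alpha$ goes from $e_i$ to $e_j$, $[e_i,e_j]=0$ if not adjacent, edges central; $\mathfrak z=\mathrm{span}(A)$. Lie bialgebra structure: linear $\delta:\mathfrak n\to\Lambda^2\mathfrak n$ with co-Jacobi and the 1-cocycle condition $\delta[x,y]=[\delta x,y]+[x,\delta y]$. *)

From HB Require Import structures.
From mathcomp Require Import all_boot all_order all_algebra.
Set Implicit Arguments. Unset Strict Implicit. Unset Printing Implicit Defensive.
Import Order.TTheory GRing.Theory.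
Local Open Scope ring_scope.

(* Graph on vertices e_0,...,e_{n-1} (type 'I_n), adjacency relation adj.
   An edge is a pair (i,j) with i < j and adj i j; it is oriented from i to j. *)
Definition edge (n : nat) (adj : rel 'I_n) :=
  {p : 'I_n * 'I_n | (p.1 < p.2)%N && adj p.1 p.2}.

Definition esrc n (adj : rel 'I_n) (a : edge adj) : 'I_n := (val a).1.
Definition etgt n (adj : rel 'I_n) (a : edge adj) : 'I_n := (val a).2.

Definition bidx n (adj : rel 'I_n) := ('I_n + edge adj)%type.

Section NG.
Variables (F : fieldType) (n : nat) (adj : rel 'I_n).

(* vectors of n(G) (coordinates in the basis V ∪ A) *)
Local Notation vec := {ffun bidx adj -> F^o}.
(* tensors in n(G) ⊗ n(G); Λ²n(G) is the subspace of skew tensors *)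
Local Notation ten := {ffun bidx adj * bidx adj -> F^o}.

Definition bv (b : bidx adj) : vec := [ffun c => (c == b)%:R].

Definition edge_of (i j : 'I_n) : option (edge adj) := insub (i, j).

Definition brB (b c : bidx adj) : vec :=
  match b, c with
  | inl i, inl j =>
      match edge_of i j, edge_of j i with
      | Some a, _ => bv (inr a)
      | None, Some a => - bv (inr a)
      | None, None => 0
      end
  | _, _ => 0
  end.

Definition br (x y : vec) : vec :=
  \sum_(b : bidx adj) \sum_(c : bidx adj) (x b * y c) *: brB b c.

Definition tens (u v : vec) : ten := [ffun p => u p.1 * v p.2].
Definition wedge (u v : vec) : ten := tens u v - tens v u.

Definition skew (t : ten) : Prop := forall p q, t (p, q) = - t (q, p).

(* adjoint action of x on n ⊗ n : x.(u⊗v) = [x,u]⊗v + u⊗[x,v] *)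
Definition act (x : vec) (t : ten) : ten :=
  \sum_(p : bidx adj * bidx adj)
     t p *: (tens (br x (bv p.1)) (bv p.2) + tens (bv p.1) (br x (bv p.2))).

(* 1-cocycle condition δ[x,y] = [δx,y] + [x,δy] = x.δy - y.δx *)
Definition cocycle (delta : vec -> ten) : Prop :=
  forall x y : vec, delta (br x y) = act x (delta y) - act y (delta x).

(* co-Jacobi: the cyclic sum of (δ ⊗ id) δ (x) vanishes.
   With δ x = Σ c(p,q) b_p ⊗ b_q, (δ⊗id)δ x has coefficient
   T(r,s,q) = Σ_p c(p,q) δ(b_p)(r,s) on b_r ⊗ b_s ⊗ b_q. *)
Definition dd (delta : vec -> ten) (x : vec) (r s q : bidx adj) : F :=
  \sum_(p : bidx adj) delta x (p, q) * delta (bv p) (r, s).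

Definition coJacobi (delta : vec -> ten) : Prop :=
  forall (x : vec) (r s q : bidx adj),
    dd delta x r s q + dd delta x s q r + dd delta x q r s = 0.

Definition lie_bialgebra (delta : {linear vec -> ten}) : Prop :=
  [/\ forall x, skew (delta x), cocycle delta & coJacobi delta].

Definition is_edge_idx (b : bidx adj) : bool := if b is inr _ then true else false.

Definition in_L2z (t : ten) : Prop :=
  skew t /\ forall b c, ~~ (is_edge_idx b && is_edge_idx c) -> t (b, c) = 0.
End NG.

Notation vec F adj := {ffun bidx adj -> F^o}.
Notation ten F adj := {ffun bidx adj * bidx adj -> F^o}.

(* Evaluate the cocycle condition on the two ends e_i, e_j of alpha_0: the left side
   delta[e_i, e_j] = delta(alpha_0) vanishes.  On the right side, e_i.delta(e_j) - e_j.delta(e_i),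
   the coefficient of alpha_0 (x) alpha (alpha <> alpha_0) only receives the terms
   e_j /\ alpha of delta(e_j) and e_i /\ alpha of delta(e_i), since the bracket of a vertex
   with anything but e_j (resp. e_i) never produces alpha_0, and the Λ²z parts are killed by
   the bracket.  So it equals lambda_{j,alpha} + lambda_{i,alpha}. *)
From HB Require Import structures.
From mathcomp Require Import all_boot all_order all_algebra.
Import GRing.Theory.
Set Implicit Arguments.
Unset Strict Implicit.
Unset Printing Implicit Defensive.
Local Open Scope ring_scope.

Section GraphLieAlgebra.
Variables (F : fieldType) (n : nat) (adj : rel 'I_n).

Local Notation vec := (vec F adj).
Local Notation ten := (ten F adj).
Local Notation bv := (bv F).

Lemma bvE (b c : bidx adj) : bv b c = (c == b)%:R.
Proof. by rewrite ffunE. Qed.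

Lemma br_bv (b c : bidx adj) : br (bv b) (bv c) = brB F b c.
Proof.
rewrite /br (bigD1 b) //= [X in _ + X]big1 => [|b' /negbTE nb]; last first.
  by rewrite big1 // => c' _; rewrite bvE nb mul0r scale0r.
rewrite addr0 (bigD1 c) //= [X in _ + X]big1 => [|c' /negbTE nc].
  by rewrite !bvE !eqxx mul1r scale1r addr0.
by rewrite !bvE nc mulr0 scale0r.
Qed.

Lemma brB_edger (b : bidx adj) (a : edge adj) : brB F b (inr a) = 0.
Proof. by case: b. Qed.

Lemma edge_ofP (i j : 'I_n) (a : edge adj) : val a = (i, j) -> edge_of adj i j = Some a.
Proof. by move=> va; rewrite /edge_of -va valK. Qed.

Lemma brB_edge_ends (a : edge adj) : brB F (inl (esrc a)) (inl (etgt a)) = bv (inr a).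
Proof. by rewrite /= (@edge_ofP (esrc a) (etgt a) a (surjective_pairing _)). Qed.

Lemma edge_of_rev (i j : 'I_n) (a b : edge adj) :
  edge_of adj i j = Some a -> edge_of adj j i = Some b -> False.
Proof.
rewrite /edge_of; case: insubP => // _ /andP[lt_ij _] _ _.
case: insubP => // _ /andP[lt_ji _] _ _.
by move: (ltn_trans lt_ij lt_ji); rewrite ltnn.
Qed.

Lemma brB_vertexC (i j : 'I_n) :
  brB F (inl j : bidx adj) (inl i) = - brB F (inl i : bidx adj) (inl j).
Proof.
rewrite /=; case Eij: (edge_of adj i j) => [a|]; case Eji: (edge_of adj j i) => [b|].
- by case: (edge_of_rev Eij Eji).
- by [].
- by rewrite opprK.
- exact/esym/oppr0.
Qed.

Lemma act_bvE (b : bidx adj) (t : ten) (r s : bidx adj) :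
  act (bv b) t (r, s) =
  \sum_c t (c, s) * brB F b c r + \sum_c t (r, c) * brB F b c s.
Proof.
rewrite /act sum_ffunE.
under eq_bigr do rewrite /tens !ffunE /= !br_bv -[_ *: _]/(_ * _) mulrDr.
have sum_pairE (f : bidx adj * bidx adj -> F) : \sum_p f p = \sum_c \sum_d f (c, d).
  by rewrite pair_big; apply: eq_bigr => -[].
rewrite big_split /= !sum_pairE /=.
congr (_ + _); last first.
  rewrite (bigD1 r) //= [X in _ + X]big1 => [|c /negbTE nc]; last first.
    by rewrite big1 // => d _; rewrite eq_sym nc mul0r mulr0.
  by rewrite addr0; apply: eq_bigr => c _; rewrite eqxx mul1r.
apply: eq_bigr => c _.
rewrite (bigD1 s) //= [X in _ + X]big1 => [|d /negbTE nd].
  by rewrite eqxx mulr1 addr0.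
by rewrite eq_sym nd !mulr0.
Qed.

Definition diag_cobracket (k : 'I_n) (l : edge adj -> F) (omega : ten) : ten :=
  \sum_(a : edge adj) l a *: wedge (bv (inl k)) (bv (inr a)) + omega.

Lemma wedge_bvE (u w x y : bidx adj) :
  wedge (bv u) (bv w) (x, y) = (x == u)%:R * (y == w)%:R - (x == w)%:R * (y == u)%:R.
Proof. by rewrite !ffunE. Qed.

Lemma diag_cobracket_vertex_edge k l omega (m : 'I_n) (a : edge adj) :
  in_L2z omega ->
  diag_cobracket k l omega (inl m, inr a) = (m == k)%:R * l a /\
  diag_cobracket k l omega (inr a, inl m) = - ((m == k)%:R * l a).
Proof.
case=> _ omega0; rewrite /diag_cobracket !ffunE !sum_ffunE.
rewrite omega0 // omega0 // !addr0.
under eq_bigr do rewrite ffunE wedge_bvE /= mul0r subr0.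
under [X in _ /\ X = _]eq_bigr do rewrite ffunE wedge_bvE /= mul0r sub0r.
have inrE (b c : edge adj) : (inr b == inr c :> bidx adj) = (b == c) by [].
have inlE (i j : 'I_n) : (inl i == inl j :> bidx adj) = (i == j) by [].
rewrite !inlE; split.
  rewrite (bigD1 a) //= big1 => [|c /negbTE nc]; last first.
    by rewrite inrE [a == c]eq_sym nc mulr0 scaler0.
  by rewrite inrE eqxx mulr1 addr0 mulrC.
rewrite (bigD1 a) //= big1 => [|c /negbTE nc]; last first.
  by rewrite inrE [a == c]eq_sym nc mul0r oppr0 scaler0.
by rewrite inrE eqxx mul1r addr0 scalerN mulrC.
Qed.

Lemma act_vertex_diag_cobracket (b k : 'I_n) l omega (d : ten) (r s : edge adj) :
  in_L2z omega -> d = diag_cobracket k l omega ->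
  act (bv (inl b)) d (inr r, inr s) =
  l s * brB F (inl b) (inl k) (inr r) - l r * brB F (inl b) (inl k) (inr s).
Proof.
move=> omegaL2z ->.
have coefE m a := @diag_cobracket_vertex_edge k l omega m a omegaL2z.
rewrite act_bvE !big_sumType.
rewrite [X in _ + X + _]big1 => [|c _]; last by rewrite brB_edger [(0 : vec) _]ffunE mulr0.
rewrite [X in _ + (_ + X)]big1 => [|c _]; last by rewrite brB_edger [(0 : vec) _]ffunE mulr0.
rewrite !addr0 (bigD1 k) // [X in _ + X + _]big1 => [|m /negbTE nm]; last first.
  by rewrite (coefE m s).1 nm !mul0r.
rewrite (bigD1 k) // [X in _ + (_ + X)]big1 => [|m /negbTE nm]; last first.
  by rewrite (coefE m r).2 nm mul0r oppr0 mul0r.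
by rewrite (coefE k s).1 (coefE k r).2 eqxx !mul1r !addr0 mulNr.
Qed.

End GraphLieAlgebra.

Theorem mainTheorem15 (F : fieldType) (n : nat) (adj : rel 'I_n)
  (charF0 : [pchar F] =i pred0)
  (adj_sym : symmetric adj) (adj_irr : irreflexive adj)
  (no_isolated : forall i : 'I_n, exists j : 'I_n, adj i j)
  (delta : {linear vec F adj -> ten F adj})
  (Hbialg : lie_bialgebra delta)
  (Hz : forall a : edge adj, delta (bv F (inr a)) = 0)
  (lam : 'I_n -> edge adj -> F)
  (Hform : forall i : 'I_n, exists omega : ten F adj,
      in_L2z omega /\
      delta (bv F (inl i)) =
        \sum_(a : edge adj) lam i a *: wedge (bv F (inl i)) (bv F (inr a)) + omega)
  (a0 : edge adj) :
  forall a : edge adj, a != a0 -> lam (esrc a0) a = - lam (etgt a0) a.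
Proof.
move=> a /negbTE a_neq_a0; have [_ cocycle_delta _] := Hbialg.
move: (esrc a0) (etgt a0) (brB_edge_ends F a0) => i j bracket_ij.
have [omi [Li deltai]] := Hform i; have [omj [Lj deltaj]] := Hform j.
have delta_bracket : delta (br (bv F (inl i)) (bv F (inl j))) = 0.
  by rewrite br_bv bracket_ij; exact: Hz.
have : 0 = act (bv F (inl i)) (delta (bv F (inl j)))
           - act (bv F (inl j)) (delta (bv F (inl i))).
  by rewrite -delta_bracket; exact: cocycle_delta.
move=> /(congr1 (fun t : ten F adj => t (inr a0, inr a))).
rewrite [(0 : ten F adj) _]ffunE [((_ : ten F adj) - _) _]ffunE.
rewrite [(- (_ : ten F adj)) _]ffunE (act_vertex_diag_cobracket i a0 a Lj deltaj).
rewrite (act_vertex_diag_cobracket j a0 a Li deltai).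
rewrite [brB F (inl j) _]brB_vertexC bracket_ij !ffunE /= eqxx.
rewrite -[inr a == inr a0]/(a == a0) a_neq_a0 /= mulr1n mulr0n oppr0.
rewrite !mulr0 !subr0 mulr1 mulrN1 opprK.
by move=> /esym/eqP; rewrite addrC addr_eq0 => /eqP.
Qed.
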